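(* Let $R \subseteq S$ be an extension of commutative rings, where $R$ is a local ring (not necessarily Noetherian) with maximal ideal $\mathfrak m$. Then the strict closure $R^*$ of $R$ in $S$ satisfies $R^* \subseteq R + \mathfrak m S$. In particular, if $\mathfrak m S \subseteq R$, then $R$ is strictly closed in $S$.
   Context: For an extension of commutative rings $R \subseteq S$, the strict closure of $R$ in $S$ is $R^* = \{\alpha \in S \mid \alpha\otimes 1 = 1\otimes \alpha \text{ in } S\otimes_R S\}$; one says $R$ is strictly closed in $S$ if $R = R^*$. *)

From HB Require Import structures.
From mathcomp Require Import all_boot all_order all_algebra.
Set Implicit Arguments. Unset Strict Implicit. Unset Printing Implicit Defensive.
Import GRing.Theory.
Local Open Scope ring_scope.

Definition is_ideal (R : comPzRingType) (I : R -> Prop) : Prop :=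
  [/\ I 0, (forall x y, I x -> I y -> I (x + y)) & (forall r x, I x -> I (r * x))].

Definition is_maximal_ideal (R : comPzRingType) (m : R -> Prop) : Prop :=
  [/\ is_ideal m, ~ m 1 &
      forall J : R -> Prop, is_ideal J -> ~ J 1 -> (forall x, m x -> J x) ->
        forall x, J x -> m x].

Definition local_ring_with (R : comPzRingType) (m : R -> Prop) : Prop :=
  is_maximal_ideal m /\
  forall J : R -> Prop, is_maximal_ideal J -> forall x, J x <-> m x.

(* ---- The tensor product S (x)_R S, for an R-algebra S given by f : R -> S.
   It is the free abelian group on S * S (formal Z-combinations, represented
   as functions S * S -> int) modulo the subgroup generated by the
   bilinearity and R-balancedness relations.  [tensor_rel f u] says the
   formal combination u lies in that subgroup, i.e. u = 0 in S (x)_R S. *)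
Definition fsing (S : comPzRingType) (p : S * S) : S * S -> int :=
  fun q => if q == p then 1 else 0.

Inductive tensor_rel (R S : comPzRingType) (f : R -> S) : (S * S -> int) -> Prop :=
| tr_addl x x' y : tensor_rel f
    (fun q => fsing (x + x', y) q - fsing (x, y) q - fsing (x', y) q)
| tr_addr x y y' : tensor_rel f
    (fun q => fsing (x, y + y') q - fsing (x, y) q - fsing (x, y') q)
| tr_bal r x y : tensor_rel f
    (fun q => fsing (f r * x, y) q - fsing (x, f r * y) q)
| tr_zero : tensor_rel f (fun _ => 0)
| tr_add g h : tensor_rel f g -> tensor_rel f h -> tensor_rel f (fun q => g q + h q)
| tr_opp g : tensor_rel f g -> tensor_rel f (fun q => - g q)
| tr_ext g h : (forall q, g q = h q) -> tensor_rel f g -> tensor_rel f h.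

Definition in_strict_closure (R S : comPzRingType) (f : R -> S) (a : S) : Prop :=
  tensor_rel f (fun q => fsing (a, 1) q - fsing (1, a) q).

Definition strictly_closed (R S : comPzRingType) (f : R -> S) : Prop :=
  forall a : S, in_strict_closure f a <-> exists r, a = f r.

Definition in_ext_ideal (R S : comPzRingType) (f : R -> S) (m : R -> Prop) (s : S) : Prop :=
  exists l : seq (R * S), (forall p, p \in l -> m p.1) /\
    s = \sum_(p <- l) f p.1 * p.2.

From mathcomp Require Import all_boot all_order all_algebra.
From mathcomp Require Import boolp classical_sets ring.
Set Implicit Arguments. Unset Strict Implicit. Unset Printing Implicit Defensive.
Import GRing.Theory.
Local Open Scope ring_scope.

(* Let k = R/m.  If mS = S there is nothing to prove.  Otherwise S/mS is a
   nonzero k-vector space, so (by Zorn's lemma) it has a k-linear functional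
   phi with phi(1) = 1; concretely phi is a map S -> R that is additive and
   R-linear modulo m, with phi 1 = 1 mod m.  The map (x, y) |-> phi(y) x,
   read in S/mS, is additive in each variable and R-balanced, hence it
   factors through S (x)_R S.  Applied to a (x) 1 = 1 (x) a it yields
   phi(1) a = phi(a) modulo mS, i.e. a is in R + mS.  The second claim
   follows: if mS is contained in R, then R^* is contained in R, and the
   reverse inclusion holds since r (x) 1 = 1 (x) r for r in R. *)

Section Ideals.
Variables (R : comPzRingType) (I : R -> Prop).
Hypothesis I_ideal : is_ideal I.

Lemma ideal0 : I 0. Proof. by case: I_ideal. Qed.

Lemma idealD x y : I x -> I y -> I (x + y). Proof. by case: I_ideal => _ + _; apply. Qed.

Lemma idealM r x : I x -> I (r * x). Proof. by case: I_ideal => _ _; apply. Qed.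

Lemma idealN x : I x -> I (- x).
Proof. by move=> Ix; rewrite -mulN1r; apply: idealM. Qed.

End Ideals.

(* Every element outside a maximal ideal is invertible modulo it: the ideal
   m + Rs properly contains m, hence contains 1. *)
Lemma maximal_ideal_inv (R : comPzRingType) (m : R -> Prop) (s : R) :
  is_maximal_ideal m -> ~ m s -> exists t, m (t * s - 1).
Proof.
move=> [m_ideal _ m_max] ns.
pose J x := exists t y, m y /\ x = t * s + y.
have J_ideal : is_ideal J.
  split.
  - by exists 0, 0; rewrite mul0r addr0; split => //; apply: ideal0.
  - move=> _ _ [t1 [y1 [m1 ->]]] [t2 [y2 [m2 ->]]].
    by exists (t1 + t2), (y1 + y2); split; [apply: idealD | ring].
  - move=> r _ [t [y [my ->]]].
    by exists (r * t), (r * y); split; [apply: idealM | ring].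
have [[t [y [my e1]]]|nJ1] := pselect (J 1).
  exists t; have -> : t * s - 1 = - y by rewrite e1; ring.
  exact: idealN.
exfalso; apply/ns/(m_max J J_ideal nJ1).
- by move=> x mx; exists 0, x; rewrite mul0r add0r.
- by exists 1, 0; rewrite mul1r addr0; split => //; apply: ideal0.
Qed.

Section ExtendedIdeal.
Variables (R S : comPzRingType) (f : {rmorphism R -> S}) (m : R -> Prop).
Local Notation mS := (in_ext_ideal f m).

Lemma ext_ideal0 : mS 0. Proof. by exists [::]; split=> //; rewrite big_nil. Qed.

Lemma ext_idealD x y : mS x -> mS y -> mS (x + y).
Proof.
move=> [l1 [m1 ->]] [l2 [m2 ->]]; exists (l1 ++ l2); rewrite big_cat.
by split=> // p; rewrite mem_cat => /orP[/m1|/m2].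
Qed.

Lemma ext_idealM s x : mS x -> mS (s * x).
Proof.
move=> [l [ml ->]]; exists [seq (p.1, s * p.2) | p <- l]; split.
  by move=> p /mapP [q ql ->]; exact: (ml q ql).
by rewrite big_map mulr_sumr; apply: eq_bigr => p _ /=; ring.
Qed.

Lemma ext_idealN x : mS x -> mS (- x).
Proof. by move=> mx; rewrite -mulN1r; apply: ext_idealM. Qed.

Lemma ext_idealB x y : mS x -> mS y -> mS (x - y).
Proof. by move=> mx my; apply: ext_idealD => //; apply: ext_idealN. Qed.

Lemma ext_ideal_gen z x : m z -> mS (f z * x).
Proof.
move=> mz; exists [:: (z, x)]; rewrite big_seq1; split=> // p.
by rewrite inE => /eqP ->.
Qed.

End ExtendedIdeal.

(* If psi is additive in each variable and
   R-balanced modulo a subgroup N of V, every tensor relation evaluates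
   into N. *)
Section BalancedEvaluation.
Variables (R S : comPzRingType) (f : R -> S) (V : zmodType).
Variables (psi : S * S -> V) (N : V -> Prop).
Hypothesis N0 : N 0.
Hypothesis ND : forall x y, N x -> N y -> N (x + y).
Hypothesis NN : forall x, N x -> N (- x).
Hypothesis psi_addl : forall x x' y, N (psi (x + x', y) - psi (x, y) - psi (x', y)).
Hypothesis psi_addr : forall x y y', N (psi (x, y + y') - psi (x, y) - psi (x, y')).
Hypothesis psi_bal : forall r x y, N (psi (f r * x, y) - psi (x, f r * y)).

Definition supp_in (u : S * S -> int) (l : seq (S * S)) :=
  forall q, u q != 0 -> q \in l.

Definition eval (u : S * S -> int) (l : seq (S * S)) := \sum_(q <- l) psi q *~ u q.

Lemma eval_supp_inv u l l' : uniq l -> uniq l' -> supp_in u l -> supp_in u l' ->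
  eval u l = eval u l'.
Proof.
move=> ul ul' sl sl'.
have restrict a b : supp_in u b -> eval u a = \sum_(q <- a | q \in b) psi q *~ u q.
  move=> sb; rewrite /eval [RHS]big_mkcond; apply: eq_bigr => q _.
  case: ifP => // /negbT qb; have [->|/sb] := eqVneq (u q) 0; first by rewrite mulr0z.
  by rewrite (negbTE qb).
rewrite (restrict l l') // (restrict l' l) // -[LHS]big_filter -[RHS]big_filter.
apply/perm_big/uniq_perm; rewrite ?filter_uniq // => q.
by rewrite !mem_filter andbC.
Qed.

Lemma eval_extend u l s : uniq l -> supp_in u l -> eval u l = eval u (undup (l ++ s)).
Proof.
move=> ul sl; apply: eval_supp_inv; rewrite ?undup_uniq //.
by move=> q /sl ql; rewrite mem_undup mem_cat ql.
Qed.

Lemma in_undup_catr (p : S * S) l s : p \in s -> p \in undup (l ++ s).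
Proof. by move=> ps; rewrite mem_undup mem_cat ps orbT. Qed.

Lemma fsing_out (p q : S * S) : q != p -> fsing p q = 0.
Proof. by rewrite /fsing => /negbTE ->. Qed.

Lemma eval_fsing p l : uniq l -> p \in l -> eval (fsing p) l = psi p.
Proof.
move=> ul pl; rewrite /eval (bigD1_seq p) //= /fsing eqxx mulr1z big1 ?addr0 //.
by move=> q /negbTE ->.
Qed.

Lemma eval_fsing_undup p l s : p \in s -> eval (fsing p) (undup (l ++ s)) = psi p.
Proof. by move=> ps; rewrite eval_fsing ?undup_uniq ?in_undup_catr. Qed.

Lemma eval_add u v l : eval (fun q => u q + v q) l = eval u l + eval v l.
Proof. by rewrite /eval -big_split; apply: eq_bigr => q _; rewrite mulrzDr. Qed.

Lemma eval_opp u l : eval (fun q => - u q) l = - eval u l.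
Proof. by rewrite /eval -sumrN; apply: eq_bigr => q _; rewrite mulrNz. Qed.

Lemma eval_sub u v l : eval (fun q => u q - v q) l = eval u l - eval v l.
Proof. by rewrite eval_add eval_opp. Qed.

Definition N_valued (u : S * S -> int) :=
  (exists l, supp_in u l) /\ forall l, uniq l -> supp_in u l -> N (eval u l).

Lemma supp_in2 p1 p2 : supp_in (fun q => fsing p1 q - fsing p2 q) [:: p1; p2].
Proof.
move=> q; apply: contraR; rewrite !inE => /norP[/fsing_out-> /fsing_out->].
by rewrite subr0.
Qed.

Lemma supp_in3 p1 p2 p3 :
  supp_in (fun q => fsing p1 q - fsing p2 q - fsing p3 q) [:: p1; p2; p3].
Proof.
move=> q; apply: contraR; rewrite !inE.
by move=> /norP[/fsing_out-> /norP[/fsing_out-> /fsing_out->]]; rewrite !subr0.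
Qed.

(* N-valued combinations are closed under sums: evaluate both summands on
   a common list containing both supports. *)
Lemma N_valued_add g h : N_valued g -> N_valued h -> N_valued (fun q => g q + h q).
Proof.
move=> [[lg sg] Ng] [[lh sh] Nh]; split.
  exists (lg ++ lh) => q; rewrite mem_cat.
  by have [->|/sg -> //] := eqVneq (g q) 0; rewrite add0r => /sh ->; rewrite orbT.
move=> l ul sl; rewrite (eval_extend (lg ++ lh) ul sl) eval_add.
apply: ND; [apply: Ng | apply: Nh]; rewrite ?undup_uniq //.
  by move=> q /sg qg; rewrite in_undup_catr // mem_cat qg.
by move=> q /sh qh; rewrite in_undup_catr // mem_cat qh orbT.
Qed.

Lemma tensor_rel_N_valued u : tensor_rel f u -> N_valued u.
Proof.
elim=> [x x' y | x y y' | r x y | | g h _ Ng _ Nh | g _ [[lg sg] Ng] | g h e _ [[lg sg] Ng]].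
- split; first by exists [:: (x + x', y); (x, y); (x', y)]; apply: supp_in3.
  move=> l ul /(eval_extend [:: (x + x', y); (x, y); (x', y)] ul) ->.
  rewrite !eval_sub !eval_fsing_undup;
    [exact: psi_addl | by rewrite !inE eqxx ?orbT ..].
- split; first by exists [:: (x, y + y'); (x, y); (x, y')]; apply: supp_in3.
  move=> l ul /(eval_extend [:: (x, y + y'); (x, y); (x, y')] ul) ->.
  rewrite !eval_sub !eval_fsing_undup;
    [exact: psi_addr | by rewrite !inE eqxx ?orbT ..].
- split; first by exists [:: (f r * x, y); (x, f r * y)]; apply: supp_in2.
  move=> l ul /(eval_extend [:: (f r * x, y); (x, f r * y)] ul) ->.
  rewrite !eval_sub !eval_fsing_undup;
    [exact: psi_bal | by rewrite !inE eqxx ?orbT ..].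
- split=> [|l _ _]; first by exists [::].
  by rewrite /eval big1 // => q _; rewrite mulr0z.
- exact: N_valued_add.
- split=> [|l ul sl]; first by exists lg => q; rewrite oppr_eq0 => /sg.
  by rewrite eval_opp; apply/NN/Ng => // q qg; apply: sl; rewrite oppr_eq0.
- split=> [|l ul sl]; first by exists lg => q; rewrite -e => /sg.
  have -> : eval h l = eval g l by apply: eq_bigr => q _; rewrite e.
  by apply: Ng => // q; rewrite e => /sl.
Qed.

Lemma strict_closure_balanced a : in_strict_closure f a -> N (psi (a, 1) - psi (1, a)).
Proof.
move=> /tensor_rel_N_valued [_ Nu].
have sl : supp_in (fun q => fsing (a, 1) q - fsing (1, a) q) (undup [:: (a, 1); (1, a)]).
  by move=> q /supp_in2; rewrite mem_undup.
have := Nu _ (undup_uniq _) sl.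
by rewrite eval_sub !eval_fsing ?undup_uniq // mem_undup !inE eqxx ?orbT.
Qed.

End BalancedEvaluation.

Local Open Scope classical_set_scope.

(* Construction of a k-linear functional on S/mS, k = R/m, taking the value 1
   at 1.  Its kernel is modelled by an "admissible" set U: an R-submodule of
   S containing mS and meeting the image of R only in the image of m.  A
   maximal admissible U (Zorn) satisfies S = U + f(R). *)
Section ResidueFunctional.
Variables (R S : comPzRingType) (f : {rmorphism R -> S}) (m : R -> Prop).
Hypothesis m_max : is_maximal_ideal m.
Local Notation mS := (in_ext_ideal f m).

Definition admissible (U : set S) : Prop :=
  [/\ mS `<=` U, forall x y, U x -> U y -> U (x + y),
      forall r x, U x -> U (f r * x) & forall r, U (f r) -> m r].

Lemma admissibleN U x : admissible U -> U x -> U (- x).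
Proof. by case=> _ _ UM _ Ux; rewrite -mulN1r -(rmorphN1 f); apply: UM. Qed.

(* mS itself is admissible unless it is all of S: if f r is in mS for some
   r outside m, then t r = 1 mod m gives 1 in mS. *)
Lemma admissible_ext_ideal : ~ mS 1 -> admissible mS.
Proof.
move=> nmS1; split=> //; [exact: ext_idealD | by move=> r x; apply: ext_idealM |].
move=> r mSr; apply: contrapT => nmr; apply: nmS1.
have [t mt] := maximal_ideal_inv m_max nmr.
have := ext_idealB (ext_idealM (f t) mSr) (ext_ideal_gen f 1 mt).
by rewrite rmorphB rmorphM rmorph1 mulr1 opprB addrCA subrr addr0.
Qed.

Lemma admissible_bigcup (F : set (set S)) :
  F `<=` (fun U => U = set0 \/ admissible U) -> total_on F subset ->
  \bigcup_(X in F) X = set0 \/ admissible (\bigcup_(X in F) X).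
Proof.
move=> FP Ftot.
have adm X x : F X -> X x -> admissible X.
  by move=> FX Xx; case: (FP X FX) => // X0; rewrite X0 in Xx.
have [[X0 [FX0 [x0 X0x0]]]|nonempty] := pselect (exists X, F X /\ exists x, X x); last first.
  by left; apply/seteqP; split=> x // [X FX Xx]; apply: nonempty; exists X; split=> //; exists x.
right; split.
- by move=> t mSt; exists X0 => //; case: (adm _ _ FX0 X0x0) => + _ _ _; apply.
- move=> x y [X1 FX1 X1x] [X2 FX2 X2y].
  have [X12|X21] := Ftot X1 X2 FX1 FX2.
    by exists X2 => //; case: (adm _ _ FX2 X2y) => _ + _ _; apply=> //; apply: X12.
  by exists X1 => //; case: (adm _ _ FX1 X1x) => _ + _ _; apply=> //; apply: X21.
- by move=> r x [X FX Xx]; exists X => //; case: (adm _ _ FX Xx) => _ _ + _; apply.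
- by move=> r [X FX Xx]; case: (adm _ _ FX Xx) => _ _ _; apply.
Qed.

(* If y is not in U + f(R), then U + Ry is still admissible: an element
   f r = u + f s y with s outside m would give y in U + f(R) after
   multiplying by an inverse of s modulo m. *)
Lemma admissible_extend U y : admissible U -> ~ (exists r, U (y - f r)) ->
  admissible (fun z => exists u s, U u /\ z = u + f s * y).
Proof.
move=> admU ny; have [UmS UD UM Um] := admU; split.
- by move=> t mSt; exists t, 0; rewrite rmorph0 mul0r addr0; split=> //; apply: UmS.
- move=> _ _ [u1 [s1 [U1 ->]]] [u2 [s2 [U2 ->]]].
  by exists (u1 + u2), (s1 + s2); rewrite rmorphD; split; [apply: UD | ring].
- move=> r _ [u [s [Uu ->]]].
  by exists (f r * u), (r * s); rewrite rmorphM; split; [apply: UM | ring].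
- move=> r [u [s [Uu fr_eq]]]; have [ms|nms] := pselect (m s).
    by apply: Um; rewrite fr_eq; apply: UD => //; apply/UmS/ext_ideal_gen.
  have [t mt] := maximal_ideal_inv m_max nms; exfalso; apply: ny; exists (t * r).
  have -> : y - f (t * r) = - (f t * u) + - (f (t * s - 1) * y).
    by rewrite rmorphM fr_eq rmorphB rmorphM rmorph1; ring.
  by apply: UD; apply: admissibleN => //; [apply: UM | apply/UmS/ext_ideal_gen].
Qed.

(* Zorn's lemma gives a maximal admissible U, and maximality together with
   admissible_extend forces S = U + f(R). *)
Lemma exists_spanning_admissible :
  ~ mS 1 -> exists U, admissible U /\ forall y, exists r, U (y - f r).
Proof.
move=> nmS1.
have [A [PA maxA]] := Zorn_bigcup admissible_bigcup.
have admA : admissible A.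
  case: PA => // A0; exfalso; apply: (maxA mS); last by right; apply: admissible_ext_ideal.
  by rewrite A0; split=> // /(_ 0 (ext_ideal0 f m)).
exists A; split=> // y; apply: contrapT => ny.
have [AmS _ _ _] := admA.
apply: (maxA _ _ (or_intror (admissible_extend admA ny))); split.
  by move=> z Az; exists z, 0; rewrite rmorph0 mul0r addr0.
move=> /(_ y) yA; apply: ny; exists 0; rewrite rmorph0 subr0; apply: yA.
by exists 0, 1; rewrite rmorph1 mul1r add0r; split=> //; apply/AmS/ext_ideal0.
Qed.

(* The functional: phi y is any r with y - f r in U; it is well defined
   modulo m, additive and R-linear modulo m, and phi 1 = 1 modulo m. *)
Lemma residue_functional : ~ mS 1 -> exists phi : S -> R,
  [/\ forall x y, m (phi (x + y) - (phi x + phi y)),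
      forall r y, m (phi (f r * y) - r * phi y) & m (phi 1 - 1)].
Proof.
move=> nmS1; have [U [admU spanU]] := exists_spanning_admissible nmS1.
have [UmS UD UM Um] := admU.
pose phi y := projT1 (cid (spanU y)).
have phiP y : U (y - f (phi y)) := projT2 (cid (spanU y)).
have phi_unique y r : U (y - f r) -> m (phi y - r).
  move=> Ur; apply: Um; have -> : f (phi y - r) = (y - f r) + - (y - f (phi y)).
    by rewrite rmorphB; ring.
  by apply: UD => //; apply: admissibleN.
exists phi; split.
- move=> x y; apply: phi_unique.
  have -> : x + y - f (phi x + phi y) = (x - f (phi x)) + (y - f (phi y)).
    by rewrite rmorphD; ring.
  exact: UD.
- move=> r y; apply: phi_unique.
  have -> : f r * y - f (r * phi y) = f r * (y - f (phi y)) by rewrite rmorphM; ring.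
  exact: UM.
- by apply: phi_unique; rewrite rmorph1 subrr; apply/UmS/ext_ideal0.
Qed.

End ResidueFunctional.

Lemma strict_closure_sub (R S : comPzRingType) (f : {rmorphism R -> S})
    (m : R -> Prop) (a : S) :
  is_maximal_ideal m -> in_strict_closure f a ->
  exists r t, in_ext_ideal f m t /\ a = f r + t.
Proof.
move=> m_max a_strict.
have [mS1|nmS1] := pselect (in_ext_ideal f m 1).
  exists 0, a; rewrite rmorph0 add0r; split=> //.
  by rewrite -[a]mulr1; apply: ext_idealM.
have [phi [phiD phiZ phi1]] := residue_functional m_max nmS1.
pose psi (q : S * S) := f (phi q.2) * q.1.
have psi_addl x x' y : in_ext_ideal f m (psi (x + x', y) - psi (x, y) - psi (x', y)).
  have -> : psi (x + x', y) - psi (x, y) - psi (x', y) = 0 by rewrite /psi /=; ring.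
  exact: ext_ideal0.
have psi_addr x y y' : in_ext_ideal f m (psi (x, y + y') - psi (x, y) - psi (x, y')).
  have -> : psi (x, y + y') - psi (x, y) - psi (x, y')
      = f (phi (y + y') - (phi y + phi y')) * x by rewrite /psi rmorphB rmorphD /=; ring.
  exact: ext_ideal_gen.
have psi_bal r x y : in_ext_ideal f m (psi (f r * x, y) - psi (x, f r * y)).
  have -> : psi (f r * x, y) - psi (x, f r * y) = - (f (phi (f r * y) - r * phi y) * x).
    by rewrite /psi rmorphB rmorphM /=; ring.
  exact/ext_idealN/ext_ideal_gen.
have := strict_closure_balanced (ext_ideal0 f m) (@ext_idealD _ _ f m)
  (@ext_idealN _ _ f m) psi_addl psi_addr psi_bal a_strict.
rewrite /psi /= => balanced.
exists (phi a), (f (phi 1) * a - f (phi a) * 1 - f (phi 1 - 1) * a); split.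
  exact/ext_idealB/ext_ideal_gen.
by rewrite rmorphB rmorph1; ring.
Qed.

Theorem corollary2p3 (R S : comPzRingType) (f : {rmorphism R -> S})
  (f_inj : injective f) (m : R -> Prop) (Hloc : local_ring_with m) :
  (forall a : S, in_strict_closure f a ->
     exists r : R, exists t : S, in_ext_ideal f m t /\ a = f r + t) /\
  ((forall t : S, in_ext_ideal f m t -> exists r : R, t = f r) ->
     strictly_closed f).
Proof.
have [m_max _] := Hloc.
have sub a := @strict_closure_sub R S f m a m_max.
split=> // mS_in_R a; split.
  move=> /sub [r [t [mSt ->]]]; have [r' ->] := mS_in_R t mSt.
  by exists (r + r'); rewrite rmorphD.
move=> [r ->]; apply: (tr_ext _ (tr_bal f r 1 1)) => q.
by rewrite !mulr1.
Qed.
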